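(* Let $U$ be a finite nonempty set, $(T,I,N)$ a residual triplet, $\widetilde{R}$ a $T$-preorder relation on $U$, $A$ a fuzzy set on $U$, and $L:\mathbb{R}\times\mathbb{R}\to\mathbb{R}^+$ a loss function of $\lor$-type. Let $\hat{A}:U\to[0,1]$ be an optimal solution of the problem $$\text{minimize }\sum_{u\in U}L(A(u),\hat{A}(u))\quad\text{subject to } T(\widetilde{R}(u,v),\hat{A}(v))\le\hat{A}(u)\ (u,v\in U),\quad 0\le\hat{A}(u)\le1\ (u\in U).$$ Define $U^-=\{u\in U;\hat{A}(u)<A(u)\}$, $U^0=\{u\in U;\hat{A}(u)=A(u)\}$, $U^+=\{u\in U;\hat{A}(u)>A(u)\}$. Then $$\hat{A}(u)=\max\{T(\widetilde{R}(u,v),\hat{A}(v)); v\in U^-\cup U^0\}\quad\text{for every } u\in U^+,$$ and $$\hat{A}(u)=\min\{I(\widetilde{R}(v,u),\hat{A}(v)); v\in U^+\cup U^0\}\quad\text{for every } u\in U^-.$$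
   Context: A residual triplet $(T,I,N)$ consists of a left-continuous $t$-norm $T$, its residual implicator $I(x,y)=\sup\{\beta\in[0,1]: T(x,\beta)\le y\}$ and $N(x)=I(x,0)$. $\widetilde{R}:U\times U\to[0,1]$ is a $T$-preorder if reflexive and $T$-transitive ($T(\widetilde{R}(u,v),\widetilde{R}(v,w))\le\widetilde{R}(u,w)$). A fuzzy set on $U$ is a map $U\to[0,1]$. A loss function $L$ is of $\lor$-type if for every real $a$: $L(a,a)=0$; the functions $x\mapsto L(x,a)$ and $x\mapsto L(a,x)$ are increasing for $x>a$; and these functions are decreasing for $x<a$. *)

From HB Require Import structures.
From mathcomp Require Import all_boot all_order all_algebra.
From mathcomp Require Import classical_sets reals.
Set Implicit Arguments. Unset Strict Implicit. Unset Printing Implicit Defensive.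
Import Order.TTheory GRing.Theory Num.Theory.
Local Open Scope ring_scope.
Local Open Scope classical_set_scope.

Section Defs.
Variable R : realType.

Definition in01 (x : R) : Prop := 0 <= x <= 1.

Definition is_tnorm (T : R -> R -> R) : Prop :=
  [/\ (forall x y, in01 x -> in01 y -> in01 (T x y)),
      (forall x y, in01 x -> in01 y -> T x y = T y x),
      (forall x y z, in01 x -> in01 y -> in01 z -> T x (T y z) = T (T x y) z),
      (forall x y z, in01 x -> in01 y -> in01 z -> y <= z -> T x y <= T x z)
    & (forall x, in01 x -> T x 1 = x)].

Definition left_continuous_tnorm (T : R -> R -> R) : Prop :=
  forall x y, in01 x -> in01 y -> 0 < x ->
    forall e, 0 < e -> exists2 d, 0 < d &
      forall z, 0 <= z -> x - d < z -> z <= x -> `|T z y - T x y| < e.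

Definition is_lc_tnorm (T : R -> R -> R) : Prop :=
  is_tnorm T /\ left_continuous_tnorm T.

Definition residual (T : R -> R -> R) (x y : R) : R :=
  sup [set b : R | in01 b /\ T x b <= y].

Variable U : finType.

Definition T_preorder (T : R -> R -> R) (Rt : U -> U -> R) : Prop :=
  [/\ (forall u v, in01 (Rt u v)),
      (forall u, Rt u u = 1)
    & (forall u v w, T (Rt u v) (Rt v w) <= Rt u w)].

Definition fuzzy_set (A : U -> R) : Prop := forall u, in01 (A u).

Definition vee_type_loss (L : R -> R -> R) : Prop :=
  [/\ (forall x y, 0 <= L x y),
      (forall a, L a a = 0),
      (forall a x y, a < x -> x < y -> L x a < L y a /\ L a x < L a y)
    & (forall a x y, x < y -> y < a -> L y a < L x a /\ L a y < L a x)].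

Definition feasible (T : R -> R -> R) (Rt : U -> U -> R) (B : U -> R) : Prop :=
  (forall u v, T (Rt u v) (B v) <= B u) /\ (forall u, in01 (B u)).

Definition total_loss (L : R -> R -> R) (A B : U -> R) : R :=
  \sum_(u : U) L (A u) (B u).

Definition optimal_solution (T : R -> R -> R) (Rt : U -> U -> R)
    (L : R -> R -> R) (A Ah : U -> R) : Prop :=
  feasible T Rt Ah /\
  forall B, feasible T Rt B -> total_loss L A Ah <= total_loss L A B.

End Defs.

From mathcomp Require Import all_boot all_order all_algebra.
From mathcomp Require Import classical_sets reals.
From mathcomp Require Import lra.
Set Implicit Arguments.
Unset Strict Implicit.
Unset Printing Implicit Defensive.
Import Order.TTheory GRing.Theory Num.Theory.
Local Open Scope ring_scope.
Local Open Scope classical_set_scope.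

(* Both halves are one order-theoretic argument about maps [phi u v] on the
   values -- x |-> T(R(u,v), x) for U^+, and x |-> I(R(v,u), x), read in the
   dual order of [0,1], for U^- -- that are the identity for u = v, compose
   sub-transitively and never increase.  Cutting the optimum Ah down to
   E = min(Ah, A) and closing again, M(w) = max_v phi w v (E v), gives a
   feasible E <= M <= Ah whose loss is nowhere larger, and strictly smaller
   wherever M(w) < Ah(w) on U^+; so M = Ah on U^+, i.e. Ah(u) = phi u v (E v)
   for some v.  If v is in U^+ too, then Ah(u) <= A(v) < Ah(v) and
   transitivity lets us continue from v; as Ah strictly increases along the
   way, this ends in U^- or U^0. *)

Lemma finite_gt_ind (disp : Order.disp_t) (D : porderType disp) (U : finType)
    (f : U -> D) (P : U -> Prop) :
  (forall u, (forall v, (f u < f v)%O -> P v) -> P u) -> forall u, P u.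
Proof.
move=> IH u; have [n] := ubnP #|[pred v | (f u < f v)%O]|.
elim: n u => // n IHn u hn; apply: IH => v huv; apply: IHn.
rewrite -ltnS (leq_trans _ hn) // ltnS; apply: proper_card; apply/properP; split.
- by apply/fintype.subsetP => w; rewrite !inE; apply: lt_trans.
- by exists v; rewrite !inE ?ltxx.
Qed.

Lemma ltr_sum_le_lt (R : numDomainType) (I : finType) (F G : I -> R) (i : I) :
  (forall j, F j <= G j) -> F i < G i -> \sum_j F j < \sum_j G j.
Proof.
move=> FG FGi; rewrite (bigD1 i) //= [X in _ < X](bigD1 i) //=.
by apply: ltr_leD => //; apply: ler_sum.
Qed.

Section ClosedOptimum.
Local Open Scope order_scope.

Variables (disp : Order.disp_t) (D : orderType disp) (R : numDomainType).
Variable U : finType.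
Variable K : D -> Prop.
Variable phi : U -> U -> D -> D.
Variables (A Ah : U -> D) (ell : U -> D -> R).
Hypothesis phiK : forall u v x, K x -> K (phi u v x).
Hypothesis phi_mono : forall u v x y, K x -> K y -> x <= y -> phi u v x <= phi u v y.
Hypothesis phi_id : forall u x, K x -> phi u u x = x.
Hypothesis phi_trans : forall u v w x, K x -> phi u v (phi v w x) <= phi u w x.
Hypothesis phi_le : forall u v x, K x -> phi u v x <= x.

Definition phi_closed (B : U -> D) : Prop :=
  (forall u v, phi u v (B v) <= B u) /\ (forall u, K (B u)).

Hypothesis KA : forall u, K (A u).
Hypothesis ell_lt : forall w x y, A w <= x -> x < y -> (ell w x < ell w y)%R.
Hypothesis Ah_closed : phi_closed Ah.
Hypothesis Ah_min :
  forall B, phi_closed B -> (\sum_w ell w (Ah w) <= \sum_w ell w (B w))%R.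

Let E w := Order.min (Ah w) (A w).
Let vmax w := [arg max_(v > w) phi w v (E v)].
Let M w := phi w (vmax w) (E (vmax w)).

Let E_K w : K (E w).
Proof. by rewrite /E minEle; case: ifP => _; [apply: Ah_closed.2 | apply: KA]. Qed.

Let le_M w v : phi w v (E v) <= M w.
Proof. by rewrite /M /vmax; case: arg_maxP => // i _; apply. Qed.

Let M_closed : phi_closed M.
Proof.
split=> [w x|w]; last exact: phiK.
by apply: le_trans (le_M w (vmax x)); apply: phi_trans.
Qed.

Let E_le_M w : E w <= M w.
Proof. by rewrite -[X in X <= _](phi_id w) //; apply: le_M. Qed.

Let M_le_Ah w : M w <= Ah w.
Proof.
apply: le_trans (Ah_closed.1 w (vmax w)); apply: phi_mono => //.
  exact: Ah_closed.2.
by rewrite /E ge_min lexx.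
Qed.

Let A_le_M w : M w < Ah w -> A w <= M w.
Proof.
move=> ltMAh; have := E_le_M w; rewrite /E minEle.
by case: ifP => // _ /(lt_le_trans ltMAh); rewrite ltxx.
Qed.

Let M_eq_Ah w : A w < Ah w -> M w = Ah w.
Proof.
move=> ltAAh; apply/eqP; rewrite eq_le M_le_Ah /= leNgt; apply/negP => ltMAh.
suff: (\sum_w ell w (M w) < \sum_w ell w (Ah w))%R.
  by move/(le_lt_trans (Ah_min M_closed)); rewrite ltxx.
apply: (ltr_sum_le_lt (i := w)); last exact: ell_lt (A_le_M ltMAh) ltMAh.
move=> j; have [->|neMAh] := eqVneq (M j) (Ah j); first exact: lexx.
have ltMAh' : M j < Ah j by rewrite lt_neqAle neMAh M_le_Ah.
by apply/ltW/ell_lt/ltMAh'; apply: A_le_M.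
Qed.

Lemma optimal_closed_above u : A u < Ah u ->
  (exists2 v, Ah v <= A v & Ah u = phi u v (Ah v)) /\
  (forall v, Ah v <= A v -> phi u v (Ah v) <= Ah u).
Proof.
move=> ltAAh; split; last by move=> v _; apply: Ah_closed.1.
elim/(finite_gt_ind (f := Ah)): u ltAAh => u IH ltAAh.
have := M_eq_Ah ltAAh; rewrite /M; set v := vmax u => Ahu.
have [leAhA|ltAAhv] := leP (Ah v) (A v).
  by exists v => //; rewrite -Ahu /E min_l.
have Ev : E v = A v by rewrite /E min_r // ltW.
have lt_uv : Ah u < Ah v.
  by rewrite -Ahu Ev; apply: le_lt_trans ltAAhv; apply: phi_le.
have [v' lev'A Ahv] := IH v lt_uv ltAAhv.
exists v' => //; apply/le_anti/andP; split; last exact: Ah_closed.1.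
rewrite -Ahu Ev; apply: le_trans (phi_trans u v v' (Ah_closed.2 v')).
rewrite -Ahv; apply: phi_mono => //; [exact: Ah_closed.2 | exact: ltW].
Qed.

End ClosedOptimum.

Lemma in01_0 (R : realType) : in01 (0 : R).
Proof. by rewrite /in01 lexx ler01. Qed.

Lemma in01_1 (R : realType) : in01 (1 : R).
Proof. by rewrite /in01 ler01 lexx. Qed.

Section ResidualImplicator.
Variables (R : realType) (T : R -> R -> R).
Hypothesis tnT : is_tnorm T.

Lemma tnorm_in01 x y : in01 x -> in01 y -> in01 (T x y).
Proof. by case: tnT => + _ _ _ _; apply. Qed.

Lemma tnorm_monol x y z : in01 x -> in01 y -> in01 z -> x <= y -> T x z <= T y z.
Proof.
case: tnT => _ comm _ mono _ x01 y01 z01 le_xy.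
by rewrite (comm x) // (comm y) //; apply: mono.
Qed.

Lemma tnorm_1l x : in01 x -> T 1 x = x.
Proof. by case: tnT => _ comm _ _ T1 x01; rewrite comm ?T1 //; apply: in01_1. Qed.

Lemma tnorm_le_r x y : in01 x -> in01 y -> T x y <= y.
Proof.
move=> x01 y01; rewrite -[leRHS]tnorm_1l //.
by apply: tnorm_monol => //; [apply: in01_1 | case/andP: x01].
Qed.

Lemma tnorm_le_comp a b c x : in01 a -> in01 b -> in01 c -> in01 x ->
  T a b <= c -> T a (T b x) <= T c x.
Proof.
case: tnT => _ _ assoc _ _ a01 b01 c01 x01 le_abc.
by rewrite assoc //; apply: tnorm_monol => //; apply: tnorm_in01.
Qed.

Lemma tnorm_le0 x y : in01 x -> in01 y -> T x 0 <= y.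
Proof.
move=> x01 /andP[y_ge0 _]; apply: le_trans y_ge0.
by apply: tnorm_le_r => //; apply: in01_0.
Qed.

Let residual_set_ub x y : has_ubound [set b : R | in01 b /\ T x b <= y].
Proof. by exists 1 => b [/andP[_ ->]]. Qed.

Lemma residual_ge x y b : in01 b -> T x b <= y -> b <= residual T x y.
Proof. by move=> b01 le_Tb; apply: ub_le_sup. Qed.

Lemma residual_in01 x y : in01 x -> in01 y -> in01 (residual T x y).
Proof.
move=> x01 y01; apply/andP; split.
  by apply: residual_ge; [apply: in01_0 | apply: tnorm_le0].
apply: ge_sup => [|b [/andP[_ ->]]] //.
by exists 0; split; [apply: in01_0 | apply: tnorm_le0].
Qed.

Lemma le_residual_r a x : in01 a -> in01 x -> x <= residual T a x.
Proof. by move=> a01 x01; apply: residual_ge => //; apply: tnorm_le_r. Qed.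

Hypothesis lcT : left_continuous_tnorm T.

Lemma tnorm_residual_le x y : in01 x -> in01 y -> T x (residual T x y) <= y.
Proof.
move=> x01 y01; have s01 := residual_in01 x01 y01.
set s := residual T x y in s01 *.
have [->|s_neq0] := eqVneq s 0; first exact: tnorm_le0.
have s_gt0 : 0 < s by rewrite lt_def s_neq0; case/andP: s01.
rewrite leNgt; apply/negP => lt_yTs.
have e_gt0 : 0 < T x s - y by rewrite subr_gt0.
have [d d_gt0 near_s] := lcT s01 x01 s_gt0 e_gt0.
have s_sup : has_sup [set b : R | in01 b /\ T x b <= y].
  by split; [exists 0; split; [apply: in01_0 | apply: tnorm_le0] | apply: residual_set_ub].
have [b [b01 le_Tb] lt_b] := sup_adherent d_gt0 s_sup.
have /near_s : b <= s by apply: residual_ge.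
case/andP: (b01) => b_ge0 _ /(_ b_ge0 lt_b).
case: tnT => _ comm _ _ _; rewrite (comm b) // (comm s) //.
have := ler_norm (T x s - T x b); rewrite distrC; lra.
Qed.

Lemma le_residual x y b : in01 x -> in01 y -> in01 b ->
  (b <= residual T x y) = (T x b <= y).
Proof.
move=> x01 y01 b01; apply/idP/idP; last exact: residual_ge.
move=> le_b; apply: le_trans (tnorm_residual_le x01 y01).
by case: tnT => _ _ _ mono _; apply: mono => //; apply: residual_in01.
Qed.

Lemma residual_monor a x y : in01 a -> in01 x -> in01 y ->
  x <= y -> residual T a x <= residual T a y.
Proof.
move=> a01 x01 y01 le_xy; rewrite le_residual //; last exact: residual_in01.
exact: le_trans (tnorm_residual_le a01 x01) le_xy.
Qed.

Lemma residual_le_comp a b c x : in01 a -> in01 b -> in01 c -> in01 x ->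
  T b a <= c -> residual T c x <= residual T a (residual T b x).
Proof.
move=> a01 b01 c01 x01 le_bac; have r01 := residual_in01 c01 x01.
rewrite !le_residual //; [|exact: tnorm_in01 | exact: residual_in01].
exact: le_trans (tnorm_le_comp b01 a01 c01 r01 le_bac) (tnorm_residual_le c01 x01).
Qed.

Lemma residual_1l x : in01 x -> residual T 1 x = x.
Proof.
move=> x01; have one01 := in01_1 R; apply/le_anti/andP; split.
  apply: le_trans (tnorm_residual_le one01 x01).
  by rewrite tnorm_1l //; apply: residual_in01.
by rewrite le_residual // tnorm_1l.
Qed.

End ResidualImplicator.

Section VeeLoss.
Variables (R : realType) (L : R -> R -> R).
Hypothesis hL : vee_type_loss L.

Lemma vee_loss_lt_above a x y : a <= x -> x < y -> L a x < L a y.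
Proof.
case: hL => L_ge0 Laa up _; rewrite le_eqVlt => /predU1P[<- lt_ay|lt_ax lt_xy].
  have [lt_am lt_my] := midf_lt lt_ay.
  by rewrite Laa; apply: le_lt_trans (L_ge0 a _) (up _ _ _ lt_am lt_my).2.
exact: (up _ _ _ lt_ax lt_xy).2.
Qed.

Lemma vee_loss_lt_below a x y : x <= a -> y < x -> L a x < L a y.
Proof.
case: hL => L_ge0 Laa _ down; rewrite le_eqVlt => /predU1P[-> lt_ya|lt_xa lt_yx].
  have [lt_ym lt_ma] := midf_lt lt_ya.
  by rewrite Laa; apply: le_lt_trans (L_ge0 a _) (down _ _ _ lt_ym lt_ma).2.
exact: (down _ _ _ lt_yx lt_xa).2.
Qed.

End VeeLoss.

Section OptimalSolution.
Variables (R : realType) (U : finType) (T : R -> R -> R) (Rt : U -> U -> R).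
Variables (A : U -> R) (L : R -> R -> R) (Ah : U -> R).
Hypotheses (lcT : is_lc_tnorm T) (preRt : T_preorder T Rt) (A01 : fuzzy_set A).
Hypotheses (hL : vee_type_loss L) (optAh : optimal_solution T Rt L A Ah).

Lemma optimal_above_target u : A u < Ah u ->
  (exists2 v, Ah v <= A v & Ah u = T (Rt u v) (Ah v)) /\
  (forall v, Ah v <= A v -> T (Rt u v) (Ah v) <= Ah u).
Proof.
case: lcT preRt => tnT _ [Rt01 Rt_refl Rt_trans].
apply: (optimal_closed_above (K := @in01 R) (phi := fun u v => T (Rt u v))
                             (ell := fun w => L (A w))) => //.
- by move=> *; apply: tnorm_in01.
- by case: tnT => _ _ _ mono _ *; apply: mono.
- by move=> w x x01; rewrite Rt_refl tnorm_1l.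
- by move=> w v v' x x01; apply: tnorm_le_comp.
- by move=> *; apply: tnorm_le_r.
- by move=> *; apply: vee_loss_lt_above.
- exact: optAh.1.
- exact: optAh.2.
Qed.

Lemma optimal_below_target u : Ah u < A u ->
  (exists2 v, A v <= Ah v & Ah u = residual T (Rt v u) (Ah v)) /\
  (forall v, A v <= Ah v -> Ah u <= residual T (Rt v u) (Ah v)).
Proof.
case: lcT preRt => tnT lc [Rt01 Rt_refl Rt_trans].
have closed_feasible B :
    phi_closed (D := R^d) (@in01 R) (fun u v => residual T (Rt v u)) B <->
    feasible T Rt B.
  split=> -[feas B01]; split=> // w v.
    by rewrite -le_residual //; have := feas v w; rewrite leEdual.
  by rewrite leEdual le_residual //; apply: feas.
apply: (optimal_closed_above (D := R^d) (K := @in01 R)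
          (phi := fun u v => residual T (Rt v u)) (ell := fun w => L (A w))) => //.
- by move=> *; apply: residual_in01.
- by move=> w v x y x01 y01; rewrite !leEdual; apply: residual_monor.
- by move=> w x x01; rewrite Rt_refl residual_1l.
- by move=> w v v' x x01; rewrite leEdual; apply: residual_le_comp.
- by move=> w v x x01; rewrite leEdual; apply: le_residual_r.
- by move=> w x y; rewrite leEdual ltEdual; apply: vee_loss_lt_below.
- exact/closed_feasible/optAh.1.
- by move=> B /closed_feasible; apply: optAh.2.
Qed.

End OptimalSolution.

Theorem theorem1 (R : realType) (U : finType) (T : R -> R -> R)
    (Rt : U -> U -> R) (A : U -> R) (L : R -> R -> R) (Ah : U -> R) :
  (0 < #|U|)%N ->
  is_lc_tnorm T ->
  T_preorder T Rt ->
  fuzzy_set A ->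
  vee_type_loss L ->
  optimal_solution T Rt L A Ah ->
  (forall u, A u < Ah u ->
     (exists2 v, Ah v <= A v & Ah u = T (Rt u v) (Ah v)) /\
     (forall v, Ah v <= A v -> T (Rt u v) (Ah v) <= Ah u)) /\
  (forall u, Ah u < A u ->
     (exists2 v, A v <= Ah v & Ah u = residual T (Rt v u) (Ah v)) /\
     (forall v, A v <= Ah v -> Ah u <= residual T (Rt v u) (Ah v))).
Proof.
move=> _ lcT preRt A01 hL optAh; split=> u.
- exact: (optimal_above_target lcT preRt A01 hL optAh).
- exact: (optimal_below_target lcT preRt A01 hL optAh).
Qed.
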